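(* Let $\pi\in\mathfrak{S}_m$ be in standard form. Then, as $k\to\infty$, $\left(r^\pi_{1+k(m-1),k}\right)^{1/k}=O\!\left(k^{m-\pi_m+\pi_1-1}\right)$.
   Context: The standardization $\operatorname{st}(w)$ of a word of distinct integers replaces its smallest entry by 1, the next smallest by 2, etc. For $\pi\in\mathfrak{S}_m$ and $\sigma\in\mathfrak{S}_n$, $\operatorname{Em}(\pi,\sigma)=\{i\in[n-m+1]:\operatorname{st}(\sigma_i\cdots\sigma_{i+m-1})=\pi\}$. The overlap set is $\mathcal{O}_\pi=\{i\in[m-1]:\operatorname{st}(\pi_{i+1}\cdots\pi_m)=\operatorname{st}(\pi_1\cdots\pi_{m-i})\}$. A $\pi$-cluster is a pair $(\sigma,S)$ with $\sigma\in\mathfrak{S}_n$ and $S=\{i_1<\dots<i_k\}\subseteq\operatorname{Em}(\pi,\sigma)$ such that $i_1=1$, $i_k=n-m+1$, and $i_{j+1}-i_j\in\mathcal{O}_\pi$ for all $j\in[k-1]$. The cluster number $r^\pi_{n,k}$ is the number of $\pi$-clusters $(\sigma,S)$ with $\sigma\in\mathfrak{S}_n$ and $|S|=k$. $\pi\in\mathfrak{S}_m$ is in standard form if $\pi_1<\pi_m$ and $\pi_1+\pi_m\le m+1$. *)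

(* Words and permutations are 1-indexed sequences of nats. *)
From mathcomp Require Import all_boot all_fingroup.
Set Implicit Arguments. Unset Strict Implicit. Unset Printing Implicit Defensive.

Definition is_perm_seq (m : nat) (p : seq nat) : bool := perm_eq p (iota 1 m).

(* standardization of a word of distinct integers: each entry is replaced
   by its rank (number of entries <= it) *)
Definition st (w : seq nat) : seq nat := [seq count (fun y => y <= x) w | x <- w].

(* the factor w_i ... w_(i+len-1) (1-indexed i) *)
Definition window (w : seq nat) (i len : nat) : seq nat := take len (drop i.-1 w).

Definition in_Em (p w : seq nat) (i : nat) : bool :=
  [&& 1 <= i, i + size p <= (size w).+1 & st (window w i (size p)) == p].

Definition in_overlap (p : seq nat) (i : nat) : bool :=
  [&& 1 <= i, i <= (size p).-1 & st (drop i p) == st (take (size p - i) p)].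

(* (sigma, S) is a pi-cluster, S given as its increasing list i_1 < ... < i_k *)
Definition is_cluster (p w : seq nat) (S : seq nat) : bool :=
  [&& sorted ltn S, all (in_Em p w) S, head 0 S == 1,
      last 0 S == size w - size p + 1
    & all (fun pr => in_overlap p (pr.2 - pr.1)) (zip S (behead S))].

Definition word (n : nat) (s : 'S_n) : seq nat := [seq (val (s i)).+1 | i <- enum 'I_n].

(* cluster number r^pi_{n,k}; positions of S lie in {0..n}, which contains [n-m+1] *)
Definition cluster_number (p : seq nat) (n k : nat) : nat :=
  \sum_(s : 'S_n)
    #|[set S : {set 'I_n.+1} |
        (#|S| == k) && is_cluster p (word s) (sort leq [seq val i | i <- enum S])]|.

Definition standard_form (m : nat) (p : seq nat) : bool :=
  (nth 0 p 0 < nth 0 p m.-1) && (nth 0 p 0 + nth 0 p m.-1 <= m.+1).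

From mathcomp Require Import all_boot all_fingroup.
From mathcomp Require Import zify.
Set Implicit Arguments. Unset Strict Implicit. Unset Printing Implicit Defensive.

(* Write m = d + 1 and n = 1 + k d.  The k - 1 gaps of a cluster with k
   occurrences are at most d and add up to (k - 1) d, so the occurrences sit
   at 1, 1 + d, ..., 1 + (k - 1) d: each permutation carries at most one such
   cluster, and only if it contains this chain of occurrences.  Consecutive
   blocks of the chain share their end points, and a position whose pattern
   value lies between pi_1 and pi_m ("pinned") is squeezed between the two
   end points of its block.  Hence the relative order of the values at pinned
   positions depends on pi alone, and a chain permutation is determined by
   its values at the at most k (pi_1 - 1 + m - pi_m) unpinned positions,
   which gives r <= n ^ (k (pi_1 - 1 + m - pi_m)). *)

Lemma st_ltn_nth (w : seq nat) a b : a < size w -> b < size w ->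
  nth 0 (st w) a < nth 0 (st w) b -> nth 0 w a < nth 0 w b.
Proof.
move=> aw bw; rewrite /st !(nth_map 0) // !ltnNge; apply: contra => le_ba.
by apply: sub_count => x /= /leq_trans; apply.
Qed.

Lemma perm_iota_nth m (p : seq nat) : perm_eq p (iota 1 m) ->
  [/\ size p = m, uniq p & forall a, a < m -> 0 < nth 0 p a <= m].
Proof.
move=> pp; have sp : size p = m by rewrite (perm_size pp) size_iota.
split=> //; first by rewrite (perm_uniq pp) iota_uniq.
move=> a am; have : nth 0 p a \in p by rewrite mem_nth ?sp.
by rewrite (perm_mem pp) mem_iota add1n.
Qed.

Lemma last_le_gaps d x (L : seq nat) :
  all (fun pr => pr.2 - pr.1 <= d) (zip (x :: L) L) -> last x L <= x + size L * d.
Proof.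
elim: L x => [|y L IH] x /=; first by rewrite addn0.
by move=> /andP[xy /IH]; rewrite mulSn; lia.
Qed.

Lemma nth_max_gaps d x (L : seq nat) :
  all (fun pr => pr.2 - pr.1 <= d) (zip (x :: L) L) -> last x L = x + size L * d ->
  forall j, j <= size L -> nth 0 (x :: L) j = x + j * d.
Proof.
elim: L x => [|y L IH] x /=.
  by move=> _ _ j; rewrite leqn0 => /eqP->; rewrite mul0n addn0.
move=> /andP[xy gaps]; have := last_le_gaps gaps; rewrite mulSn => le_last lastL.
have ey : y = x + d by lia.
case=> [|j] jL /=; first by rewrite mul0n addn0.
by rewrite (IH y gaps) //; lia.
Qed.

Lemma cluster_positions d k (p w L : seq nat) :
  size p = d.+1 -> size w = (k * d).+1 -> size L = k -> is_cluster p w L ->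
  L = mkseq (fun j => 1 + j * d) k.
Proof.
move=> sp sw sL /and5P[_ _ + + gaps].
case: L sL gaps => [|x L] /= sL; first by rewrite -sL.
move=> gaps /eqP x1 /eqP lastL; subst x.
have {}gaps : all (fun pr => pr.2 - pr.1 <= d) (zip (1 :: L) L).
  by apply: sub_all gaps => pr /and3P[_ + _]; rewrite sp.
have {}lastL : last 1 L = 1 + size L * d by rewrite lastL sw sp -sL mulSn; lia.
apply: (@eq_from_nth _ 0) => [|j jk]; first by rewrite size_mkseq.
by rewrite nth_mkseq -?sL // (nth_max_gaps gaps lastL) // -ltnS.
Qed.

Definition sorted_vals n (S : {set 'I_n}) : seq nat := sort leq [seq val i | i <- enum S].

Lemma mem_sorted_vals n (S : {set 'I_n}) (i : 'I_n) : (val i \in sorted_vals S) = (i \in S).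
Proof. by rewrite mem_sort mem_map ?mem_enum //; exact: val_inj. Qed.

Lemma size_sorted_vals n (S : {set 'I_n}) : size (sorted_vals S) = #|S|.
Proof. by rewrite size_sort size_map -cardE. Qed.

Lemma sorted_vals_inj n : injective (@sorted_vals n).
Proof. by move=> S1 S2 eS; apply/setP => i; rewrite -!mem_sorted_vals eS. Qed.

Lemma size_word n (s : 'S_n) : size (word s) = n.
Proof. by rewrite size_map size_enum_ord. Qed.

Lemma nth_word n (s : 'S_n) (i : 'I_n) : nth 0 (word s) i = (s i).+1.
Proof. by rewrite (nth_map i) ?size_enum_ord // nth_ord_enum. Qed.

Definition occurs_chain (p w : seq nat) d k := all (in_Em p w) (mkseq (fun j => 1 + j * d) k).

Lemma card_clusters_le d k p (s : 'S_(k * d).+1) : size p = d.+1 ->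
  #|[set S : {set 'I_(k * d).+2} | (#|S| == k) && is_cluster p (word s) (sorted_vals S)]|
    <= occurs_chain p (word s) d k.
Proof.
move=> sp; set A := [set S | _].
have vals_A S : S \in A ->
    sorted_vals S = mkseq (fun j => 1 + j * d) k /\ is_cluster p (word s) (sorted_vals S).
  rewrite inE => /andP[/eqP cS cl]; split=> //.
  by apply: cluster_positions cl; rewrite ?size_word ?size_sorted_vals.
case: (boolP (occurs_chain _ _ _ _)) => occ.
  apply/card_le1_eqP => S1 S2 /vals_A[e1 _] /vals_A[e2 _].
  by apply: sorted_vals_inj; rewrite e1 e2.
rewrite leqn0 cards_eq0; apply: contraNT occ => /set0Pn[S /vals_A[eS /and5P[_]]].
by rewrite /occurs_chain -eS.
Qed.

Section KeySortedPerm.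
Variables (n : nat) (R : {pred 'I_n}) (key : 'I_n -> nat).

Definition key_sorted (s : 'S_n) := {in R &, forall i j, key i < key j -> s i < s j}.

Lemma key_sorted_inv_le (s1 s2 : 'S_n) (v : 'I_n) : key_sorted s2 ->
  (forall u : 'I_n, u < v -> (s1^-1)%g u = (s2^-1)%g u) ->
  (s1^-1)%g v \in R -> (s2^-1)%g v \in R -> key ((s2^-1)%g v) <= key ((s1^-1)%g v).
Proof.
move=> so2 IH R1 R2; rewrite leqNgt; apply/negP => /(so2 _ _ R1 R2); rewrite permKV => lt_v.
have := IH _ lt_v; rewrite permK => /perm_inj e.
by rewrite e ltnn in lt_v.
Qed.

Hypothesis key_inj : {in R &, injective key}.

Lemma key_sorted_perm_eq (s1 s2 : 'S_n) :
  key_sorted s1 -> key_sorted s2 -> {in [predC R], s1 =1 s2} -> s1 = s2.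
Proof.
move=> so1 so2 eqC.
suff inv_eq v : (s1^-1)%g v = (s2^-1)%g v.
  by apply/permP => i; rewrite -{1}(permK s2 i) -inv_eq permKV.
have [N] := ubnP v; elim: N v => // N IH v /ltnSE le_vN.
have IH1 (u : 'I_n) : u < v -> (s1^-1)%g u = (s2^-1)%g u.
  by move=> lt_uv; apply: IH; exact: leq_trans le_vN.
have IH2 (u : 'I_n) : u < v -> (s2^-1)%g u = (s1^-1)%g u by move=> /IH1.
case R1: ((s1^-1)%g v \in R); last first.
  by apply/(canRL (permK s2)); rewrite -eqC ?inE ?R1 // permKV.
case R2: ((s2^-1)%g v \in R); last first.
  by apply/esym/(canRL (permK s1)); rewrite eqC ?inE ?R2 // permKV.
apply: key_inj => //; apply/eqP; rewrite eqn_leq.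
by rewrite (key_sorted_inv_le so2 IH1) ?(key_sorted_inv_le so1 IH2).
Qed.

End KeySortedPerm.

Lemma card_ord_pred n (P : pred nat) : #|[pred i : 'I_n | P i]| = count P (iota 0 n).
Proof. by rewrite cardE /enum_mem size_filter -enumT -val_enum_ord count_map. Qed.

Lemma count_ltn_iota a c n : count (fun x => x < a) (iota c n) = minn n (a - c).
Proof. by elim: n c => [|n IH] c /=; [rewrite min0n | rewrite IH; lia]. Qed.

Lemma count_gtn_iota b c n : count (fun x => b < x) (iota c n) = n - minn n (b.+1 - c).
Proof. by elim: n c => [|n IH] c /=; [rewrite min0n | rewrite IH; lia]. Qed.

Lemma count_outside_iota a b n :
  count (fun x => ~~ (a <= x <= b)) (iota 1 n) <= (a - 1) + (n - b).
Proof.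
rewrite (@eq_count _ _ (predU (fun x => x < a) (fun x => b < x))); last first.
  by move=> x /=; rewrite negb_and -!ltnNge.
have := count_predUI (fun x => x < a) (fun x => b < x) (iota 1 n).
rewrite count_ltn_iota count_gtn_iota; lia.
Qed.

Section Blocks.
Variables (d : nat) (p : seq nat).
Hypotheses (d_gt0 : 0 < d) (p_perm : perm_eq p (iota 1 d.+1))
  (p_ends : nth 0 p 0 < nth 0 p d).

Definition pinned t := nth 0 p 0 <= nth 0 p (t %% d) <= nth 0 p d.

(* Orders positions by block, then by pattern value (which is below d.+2). *)
Definition block_key t := t %/ d * d.+2 + nth 0 p (t %% d).

Let size_p : size p = d.+1. Proof. by case: (perm_iota_nth p_perm). Qed.

Lemma nth_p_eq a b : a <= d -> b <= d -> (nth 0 p a == nth 0 p b) = (a == b).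
Proof. by move=> ad bd; rewrite nth_uniq ?size_p //; case: (perm_iota_nth p_perm). Qed.

Lemma nth_p_mod_ltn t : nth 0 p (t %% d) < d.+2.
Proof.
have [_ _ /(_ (t %% d))] := perm_iota_nth p_perm.
by rewrite ltnS => /(_ (leqW (ltn_pmod t d_gt0))) /andP[].
Qed.

Lemma block_key_div t : block_key t %/ d.+2 = t %/ d.
Proof. by rewrite /block_key divnMDl // (divn_small (nth_p_mod_ltn t)) addn0. Qed.

Lemma block_key_mod t : block_key t %% d.+2 = nth 0 p (t %% d).
Proof. by rewrite /block_key modnMDl (modn_small (nth_p_mod_ltn t)). Qed.

Lemma block_key_inj : injective block_key.
Proof.
move=> t u e; have /eqP := congr1 (modn^~ d.+2) e; rewrite !block_key_mod.
have mod_le x : x %% d <= d by rewrite ltnW // ltn_pmod.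
rewrite nth_p_eq // => /eqP eq_mod.
by rewrite (divn_eq t d) (divn_eq u d) -(block_key_div t) -(block_key_div u) e eq_mod.
Qed.

Lemma count_unpinned_block :
  count (predC pinned) (iota 0 d) <= (nth 0 p 0 - 1) + (d.+1 - nth 0 p d).
Proof.
set outside := fun x => ~~ (nth 0 p 0 <= x <= nth 0 p d).
rewrite (@eq_in_count _ _ (preim (nth 0 p) outside)); last first.
  by move=> a; rewrite mem_iota => /andP[_ lt_ad]; rewrite /= /pinned modn_small.
rewrite -count_map; apply: leq_trans (_ : count outside (map (nth 0 p) (iota 0 d.+1)) <= _).
  by rewrite -addn1 iotaD map_cat count_cat leq_addr.
have := mkseq_nth 0 p; rewrite size_p /mkseq => ->.
by rewrite (seq.permP p_perm) count_outside_iota.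
Qed.

Lemma count_unpinned k :
  count (predC pinned) (iota 0 (k * d).+1) <= k * ((nth 0 p 0 - 1) + (d.+1 - nth 0 p d)).
Proof.
have last_pinned : count (predC pinned) [:: k * d] = 0.
  by rewrite /= /pinned modnMl leqnn ltnW.
rewrite -addn1 iotaD count_cat last_pinned addn0.
have block j : count (predC pinned) (iota (j * d) d) = count (predC pinned) (iota 0 d).
  by rewrite -[j * d]addn0 iotaDl count_map; apply: eq_count => a; rewrite /= /pinned modnMDl.
elim: k {last_pinned} => [|k IH]; first by rewrite mul0n.
by rewrite mulSnr iotaD count_cat add0n block mulSnr leq_add ?count_unpinned_block.
Qed.

Section ChainOrder.
Variables (k : nat) (w : seq nat).
Hypothesis occ : occurs_chain p w d k.

Lemma occurs_chain_ltn j a b : j < k -> a <= d -> b <= d ->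
  nth 0 p a < nth 0 p b -> nth 0 w (j * d + a) < nth 0 w (j * d + b).
Proof.
move=> jk ad bd.
have /and3P[_ fits /eqP st_win] : in_Em p w (1 + j * d).
  by apply: (allP occ); apply: map_f; rewrite mem_iota.
rewrite size_p in fits st_win.
have size_win : size (window w (1 + j * d) d.+1) = d.+1.
  by rewrite /window size_takel // size_drop; lia.
rewrite -st_win => /st_ltn_nth; rewrite size_win !ltnS => /(_ ad bd).
by rewrite /window add1n /= !nth_take ?ltnS // !nth_drop.
Qed.

Lemma block_start_ltn j : j < k -> nth 0 w (j * d) < nth 0 w (j.+1 * d).
Proof.
by move=> jk; have := occurs_chain_ltn jk (leq0n d) (leqnn d) p_ends; rewrite addn0 mulSnr.
Qed.

Lemma block_start_leq i j : i <= j -> j <= k -> nth 0 w (i * d) <= nth 0 w (j * d).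
Proof.
elim: j => [|j IH]; first by rewrite leqn0 => /eqP->.
rewrite leq_eqVlt => /predU1P[->//|/IH le_ij] jk.
exact: leq_trans (le_ij (ltnW jk)) (ltnW (block_start_ltn jk)).
Qed.

Lemma div_eq_last t : t <= k * d -> t %/ d = k -> t = k * d.
Proof. by move=> tk qk; apply/eqP; rewrite eqn_leq tk -{1}qk leq_divM. Qed.

Lemma pinned_lower t : pinned t -> t <= k * d -> nth 0 w (t %/ d * d) <= nth 0 w t.
Proof.
move=> /andP[le0 _] tk; rewrite {2}(divn_eq t d) -{1}[t %/ d * d]addn0.
have mod_le : t %% d <= d by rewrite ltnW // ltn_pmod.
have [->//|a_gt0] := posnP (t %% d).
apply: ltnW; apply: occurs_chain_ltn => //.
  rewrite ltn_divLR // ltn_neqAle tk andbT; apply: contraTneq a_gt0 => ->.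
  by rewrite modnMl.
by rewrite ltn_neqAle le0 nth_p_eq // eq_sym -lt0n a_gt0.
Qed.

Lemma pinned_upper t : pinned t -> t %/ d < k -> nth 0 w t < nth 0 w ((t %/ d).+1 * d).
Proof.
move=> /andP[_ le_d] tk; rewrite {1}(divn_eq t d) mulSnr.
have lt_mod : t %% d < d by rewrite ltn_pmod.
apply: occurs_chain_ltn => //; first exact: ltnW.
by rewrite ltn_neqAle le_d andbT nth_p_eq ?(ltnW lt_mod) // neq_ltn lt_mod.
Qed.

Lemma pinned_key_sorted t u : pinned t -> pinned u -> t <= k * d -> u <= k * d ->
  block_key t < block_key u -> nth 0 w t < nth 0 w u.
Proof.
move=> pt pu tk uk lt_key.
have uk' : u %/ d <= k by have := leq_div2r d uk; rewrite mulnK.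
have mod_le x : x %% d <= d by rewrite ltnW // ltn_pmod.
have := leq_div2r d.+2 (ltnW lt_key).
rewrite !block_key_div leq_eqVlt => /predU1P[eq_div|lt_div]; last first.
  apply: leq_trans (pinned_upper pt (leq_trans lt_div uk')) _.
  exact: leq_trans (block_start_leq lt_div uk') (pinned_lower pu uk).
have jk : u %/ d < k.
  rewrite ltn_neqAle uk' andbT; apply/eqP => qk.
  by move: lt_key; rewrite (div_eq_last uk qk) (div_eq_last tk) ?eq_div // ltnn.
have lt_p : nth 0 p (t %% d) < nth 0 p (u %% d).
  by move: lt_key; rewrite /block_key eq_div ltn_add2l.
by rewrite (divn_eq t d) (divn_eq u d) eq_div; apply: occurs_chain_ltn.
Qed.

End ChainOrder.

Lemma occurs_chain_key_sorted k (s : 'S_(k * d).+1) : occurs_chain p (word s) d k ->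
  key_sorted [pred i : 'I_(k * d).+1 | pinned i] (fun i => block_key i) s.
Proof.
move=> occ i j pi pj lt_key.
by have := pinned_key_sorted occ pi pj (ltn_ord i) (ltn_ord j) lt_key; rewrite !nth_word.
Qed.

Lemma card_occurs_chain k :
  #|[set s : 'S_(k * d).+1 | occurs_chain p (word s) d k]|
    <= (k * d).+1 ^ (k * ((nth 0 p 0 - 1) + (d.+1 - nth 0 p d))).
Proof.
pose restrict (s : 'S_(k * d).+1) :=
  [ffun i : {i : 'I_(k * d).+1 | ~~ pinned i} => s (val i)].
apply: leq_trans (_ : #|{ffun {i : 'I_(k * d).+1 | ~~ pinned i} -> 'I_(k * d).+1}| <= _).
  apply: (@leq_card_in _ _ restrict) => s1 s2; rewrite !inE => occ1 occ2 /ffunP eq_restrict.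
  apply: (key_sorted_perm_eq _ (occurs_chain_key_sorted occ1) (occurs_chain_key_sorted occ2)).
    by move=> i j _ _ /block_key_inj /val_inj.
  by move=> i unpinned_i; have := eq_restrict (exist _ i unpinned_i); rewrite !ffunE.
rewrite card_ffun card_sig card_ord (card_ord_pred _ (predC pinned)) leq_pexp2l //.
exact: count_unpinned.
Qed.

End Blocks.

Lemma cluster_number_le_chains d k (p : seq nat) : size p = d.+1 ->
  cluster_number p (k * d).+1 k <= #|[set s : 'S_(k * d).+1 | occurs_chain p (word s) d k]|.
Proof.
move=> sp.
apply: leq_trans (_ : _ <= \sum_(s : 'S_(k * d).+1) (occurs_chain p (word s) d k : nat)) _.
  by apply: leq_sum => s _; apply: card_clusters_le.
rewrite -sum1dep_card; apply: eq_leq; rewrite [RHS]big_mkcond; apply: eq_bigr => s _.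
by case: occurs_chain.
Qed.

Theorem lemma4p2 (m : nat) (p : seq nat) :
  is_perm_seq m p -> standard_form m p ->
  exists C K : nat, forall k : nat, K <= k ->
    cluster_number p (1 + k * (m - 1)) k
      <= (C * k ^ (m - nth 0 p m.-1 + nth 0 p 0 - 1)) ^ k.
Proof.
move=> p_perm /andP[p_ends _].
case: m p_perm p_ends => [|[|d]] p_perm; rewrite /= ?ltnn // => p_ends.
have [size_p _ p_bounds] := perm_iota_nth p_perm.
set e := nth 0 p 0 - 1 + (d.+2 - nth 0 p d.+1).
have -> : d.+2 - nth 0 p d.+1 + nth 0 p 0 - 1 = e.
  by have := p_bounds 0 isT; have := p_bounds d.+1 (leqnn _); rewrite /e; lia.
exists (d.+2 ^ e), 1 => k k_gt0.
rewrite subn1 add1n /=.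
apply: leq_trans (cluster_number_le_chains _ size_p) _.
apply: leq_trans (card_occurs_chain _ p_perm p_ends _) _ => //.
rewrite -/e -expnMn -expnM [e * k]mulnC.
have [->|ke_gt0] := posnP (k * e); first by rewrite !expn0.
by rewrite leq_exp2r //; nia.
Qed.
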